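(* Let $M\in\mathbb{R}^{n\times n}$ be symmetric positive definite, $\delta_i,\delta_{i-1}>0$, $\epsilon\ge0$, and let $\bar P:\mathbb{R}^n\to\mathbb{R}$ (with the control value held fixed) be differentiable and $L$-weakly convex. For $\theta_i,\theta_{i-1},\theta_{i-2}\in\mathbb{R}^n$ let $$\bar E_i(\theta_i)=\frac{1}{2\delta_i^2}\Big\|\theta_i-\big(1+\tfrac{\delta_i}{\delta_{i-1}}\big)\theta_{i-1}+\tfrac{\delta_i}{\delta_{i-1}}\theta_{i-2}\Big\|_M^2+\bar P(\theta_i),$$ and suppose $\theta_i$ is an $\epsilon$-critical point, i.e. $2\Lambda_i\le\epsilon^2$ where $\Lambda_i=\frac12\|\nabla\bar E_i(\theta_i)\|^2$. Then $$\Big[\tfrac12\Big\|\tfrac{\theta_i-\theta_{i-1}}{\delta_i}\Big\|_M^2+\bar P(\theta_i)\Big]-\Big[\tfrac12\Big\|\tfrac{\theta_{i-1}-\theta_{i-2}}{\delta_{i-1}}\Big\|_M^2+\bar P(\theta_{i-1})\Big]\le\frac{L\delta_i^2+\delta_i}{2\sigma_{\min}(M)}\Big\|\frac{\theta_i-\theta_{i-1}}{\delta_i}\Big\|_M^2+\frac{\delta_i\epsilon^2}{2}.$$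
   Context: $\|x\|_M^2=x^TMx$; $\sigma_{\min}(M)$ is the smallest singular value of $M$. A function $\phi$ is $L$-weakly convex if $\phi(x)+\frac L2\|x\|^2$ is convex. The two bracketed quantities are the discrete Hamiltonians at frames $i$ and $i-1$, both evaluated with the same control value (the one used at frame $i$). *)

From HB Require Import structures.
From mathcomp Require Import all_boot all_order all_algebra.
From mathcomp Require Import all_classical all_reals all_analysis.
Set Implicit Arguments. Unset Strict Implicit. Unset Printing Implicit Defensive.
Import Order.TTheory GRing.Theory Num.Theory.
Import numFieldNormedType.Exports.
Local Open Scope ring_scope.
Local Open Scope classical_set_scope.

Section Defs.
Variables (R : realType) (n : nat).

(* ||x||_M^2 = x^T M x  (x written as a row vector, so x M x^T) *)
Definition sqnormM (M : 'M[R]_n) (x : 'rV[R]_n) : R := (x *m M *m x^T) 0 0.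

Definition sqnorm2 (x : 'rV[R]_n) : R := \sum_(j < n) x 0 j ^+ 2.

Definition sym_posdef (M : 'M[R]_n) : Prop :=
  M^T = M /\ forall x : 'rV[R]_n, x != 0 -> 0 < sqnormM M x.

Definition sigma_min (M : 'M[R]_n) : R :=
  Num.sqrt (inf [set a : R | eigenvalue (M^T *m M) a]).

Definition grad (f : 'rV[R]_n -> R) (x : 'rV[R]_n) : 'rV[R]_n :=
  \row_(j < n) 'D_(delta_mx 0 j) f x.

Definition convex_fun (f : 'rV[R]_n -> R) : Prop :=
  forall (x y : 'rV[R]_n) (t : R), 0 <= t <= 1 ->
    f (t *: x + (1 - t) *: y) <= t * f x + (1 - t) * f y.

Definition weakly_convex (L : R) (f : 'rV[R]_n -> R) : Prop :=
  convex_fun (fun x => f x + L / 2 * sqnorm2 x).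

End Defs.

(* Write p, q for the discrete velocities (θ_i - θ_{i-1})/δ_i and
   (θ_{i-1} - θ_{i-2})/δ_{i-1}.  The quadratic part of Ē_i is ½‖p - q‖²_M as a
   function of θ_i, so the gradient g of Ē_i at θ_i satisfies
   ⟨θ_i - θ_{i-1}, g⟩ = ⟨p - q, p⟩_M + D P̄(θ_i)[θ_i - θ_{i-1}].
   Convexity of the quadratic form gives ½‖p‖²_M - ½‖q‖²_M ≤ ⟨p - q, p⟩_M, and the
   first-order characterisation of L-weak convexity bounds P̄(θ_i) - P̄(θ_{i-1}) by
   D P̄(θ_i)[θ_i - θ_{i-1}] + L/2 ‖θ_i - θ_{i-1}‖².  Adding up, the energy increment
   is at most ⟨θ_i - θ_{i-1}, g⟩ + L/2 ‖θ_i - θ_{i-1}‖², which Young's inequality and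
   ‖g‖ ≤ ε bound by δ_i ε²/2 + (L δ_i² + δ_i)/2 ‖p‖².  Finally ‖p‖² ≤ ‖p‖²_M / σ_min(M),
   because for a symmetric positive definite M the smallest singular value is the
   minimum of the Rayleigh quotient, attained on the (compact) unit sphere. *)

From HB Require Import structures.
From mathcomp Require Import all_boot all_order all_algebra.
From mathcomp Require Import all_classical all_reals all_analysis.
From mathcomp Require Import ring lra.
Import Order.TTheory GRing.Theory Num.Theory.
Import numFieldNormedType.Exports.
Set Implicit Arguments. Unset Strict Implicit. Unset Printing Implicit Defensive.
Local Open Scope ring_scope.
Local Open Scope classical_set_scope.

Section DotProduct.
Variables (R : realFieldType) (n : nat).
Implicit Types (x y z : 'rV[R]_n) (M : 'M[R]_n).

Definition dot x y : R := (x *m y^T) 0 0.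

Lemma dotE x y : dot x y = \sum_(j < n) x 0 j * y 0 j.
Proof. by rewrite /dot mxE; apply: eq_bigr => j _; rewrite mxE. Qed.

Lemma dotC x y : dot x y = dot y x.
Proof. by rewrite !dotE; apply: eq_bigr => j _; rewrite mulrC. Qed.

Lemma dotDl x y z : dot (x + y) z = dot x z + dot y z.
Proof. by rewrite /dot mulmxDl mxE. Qed.

Lemma dotZl (c : R) x y : dot (c *: x) y = c * dot x y.
Proof. by rewrite /dot -scalemxAl mxE. Qed.

Lemma dotNl x y : dot (- x) y = - dot x y.
Proof. by rewrite /dot mulNmx mxE. Qed.

Lemma dotBl x y z : dot (x - y) z = dot x z - dot y z.
Proof. by rewrite dotDl dotNl. Qed.

Lemma dotDr x y z : dot x (y + z) = dot x y + dot x z.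
Proof. by rewrite dotC dotDl !(dotC x). Qed.

Lemma dotZr (c : R) x y : dot x (c *: y) = c * dot x y.
Proof. by rewrite dotC dotZl dotC. Qed.

Lemma dotBr x y z : dot x (y - z) = dot x y - dot x z.
Proof. by rewrite !(dotC x) dotBl. Qed.

Lemma dot_mulmxl M x y : dot (x *m M) y = dot x (y *m M^T).
Proof.
transitivity ((x *m (M *m y^T)) 0 0); first by rewrite mulmxA.
by rewrite -[M]trmxK -trmx_mul trmxK.
Qed.

Lemma dot_mulmx_sym M x y : M^T = M -> dot (x *m M) y = dot (y *m M) x.
Proof. by move=> MT; rewrite dot_mulmxl MT dotC. Qed.

Lemma dotxx_ge0 x : 0 <= dot x x.
Proof. by rewrite dotE; apply: sumr_ge0 => j _; rewrite -expr2 sqr_ge0. Qed.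

Lemma dotxx_eq0 x : (dot x x == 0) = (x == 0).
Proof.
apply/idP/eqP => [|->]; last by rewrite /dot mul0mx mxE.
rewrite dotE psumr_eq0 => [/allP x0|j _]; last by rewrite -expr2 sqr_ge0.
apply/rowP => j; rewrite mxE.
by have /implyP/(_ isT) := x0 j (mem_index_enum j); rewrite mulf_eq0 orbb => /eqP.
Qed.

Lemma dot_delta x (j : 'I_n) : dot x (delta_mx 0 j) = x 0 j.
Proof.
rewrite dotE (bigD1 j) //= big1 => [|i /negbTE ij]; last by rewrite !mxE ij andbF mulr0.
by rewrite !mxE !eqxx mulr1 addr0.
Qed.

Lemma dot_le_young (d : R) x y : 0 < d ->
  dot x y <= d / 2 * dot y y + (2 * d)^-1 * dot x x.
Proof.
move=> d_gt0; have := dotxx_ge0 (d *: y - x).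
rewrite !(dotBl, dotBr, dotZl, dotZr) (dotC y x) => sq_ge0.
rewrite -subr_ge0 -(pmulr_rge0 _ (mulr_gt0 (ltr0n _ 2) d_gt0)).
suff -> : 2 * d * (d / 2 * dot y y + (2 * d)^-1 * dot x x - dot x y)
  = d * (d * dot y y - dot x y) - (d * dot x y - dot x x) by [].
by field; rewrite gt_eqF.
Qed.

End DotProduct.

Section QuadraticForm.
Variables (R : realType) (n : nat).
Implicit Types (x y w v : 'rV[R]_n) (M : 'M[R]_n).

Lemma sqnormME M x : sqnormM M x = dot (x *m M) x.
Proof. by []. Qed.

Lemma sqnorm2E x : sqnorm2 x = dot x x.
Proof. by rewrite dotE; apply: eq_bigr => j _; rewrite expr2. Qed.

Lemma sqnormM1 x : sqnormM 1%:M x = sqnorm2 x.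
Proof. by rewrite sqnormME mulmx1 sqnorm2E. Qed.

Lemma sqnormMZ M (c : R) x : sqnormM M (c *: x) = c ^+ 2 * sqnormM M x.
Proof. by rewrite !sqnormME -scalemxAl dotZl dotZr mulrA -expr2. Qed.

Lemma sqnorm2Z (c : R) x : sqnorm2 (c *: x) = c ^+ 2 * sqnorm2 x.
Proof. by rewrite -!sqnormM1 sqnormMZ. Qed.

Lemma sqnormMD M x y : M^T = M ->
  sqnormM M (x + y) = sqnormM M x + 2 * dot (x *m M) y + sqnormM M y.
Proof.
by move=> MT; rewrite !sqnormME mulmxDl !(dotDl, dotDr) (dot_mulmx_sym y x MT); ring.
Qed.

Lemma sqnormM_ge0 M x : sym_posdef M -> 0 <= sqnormM M x.
Proof.
case=> _ posM; have [->|x0] := eqVneq x 0; last exact/ltW/posM.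
by rewrite sqnormME mul0mx /dot mul0mx mxE.
Qed.

Lemma half_sqnormM_sub_le M x y : sym_posdef M ->
  1 / 2 * sqnormM M x - 1 / 2 * sqnormM M y <= dot ((x - y) *m M) x.
Proof.
move=> posM; have := sqnormM_ge0 (x - y) posM.
rewrite !sqnormME !(mulmxBl, dotBl, dotBr) (dot_mulmx_sym y x posM.1); lra.
Qed.

Lemma differentiable_sqnormM M x : differentiable (sqnormM M) x.
Proof.
have coord j : differentiable (fun z : 'rV[R]_n => z 0 j) x.
  exact: differentiable_coord.
have -> : sqnormM M = \sum_(j < n) ((fun z => (z *m M) 0 j) * (fun z => z 0 j)).
  by apply/funext => z; rewrite fct_sumE sqnormME dotE.
apply: differentiable_sum => j; apply: differentiableM (coord j).
have -> : (fun z : 'rV[R]_n => (z *m M) 0 j) =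
    \sum_(i < n) (fun z : 'rV[R]_n => z 0 i * M i j).
  by apply/funext => z; rewrite fct_sumE mxE.
by apply: differentiable_sum => i; apply: differentiableM (coord i) (differentiable_cst _ _).
Qed.

Lemma continuous_sqnormM M : continuous (sqnormM M).
Proof. by move=> x; exact/differentiable_continuous/differentiable_sqnormM. Qed.

Lemma is_derive_sqnormM_shift M w x v : M^T = M ->
  is_derive x v (fun y => sqnormM M (y + w)) (2 * dot ((x + w) *m M) v).
Proof.
move=> MT; set D := 2 * _.
pose q h := D + h * sqnormM M v.
have quotE : \forall h \near (0 : R)^',
    q h = h^-1 *: (sqnormM M (h *: v + x + w) - sqnormM M (x + w)).
  near=> h; have h0 : h != 0 by near: h; exact: nbhs_dnbhs_neq.
  rewrite -addrA [h *: v + _]addrC (sqnormMD (x + w)) // sqnormMZ dotZr /q /D.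
  by rewrite /GRing.scale /=; field.
have q_cvg : q h @[h --> (0 : R)^'] --> D.
  have -> : D = q 0 by rewrite /q mul0r addr0.
  suff q_cont : {for 0, continuous q} by exact: cvg_within_filter q_cont.
  apply: continuousD; first exact: cst_continuous.
  by apply: continuousM; [exact: cvg_id | exact: cst_continuous].
have dq : h^-1 *: (sqnormM M (h *: v + x + w) - sqnormM M (x + w)) @[h --> (0 : R)^'] --> D.
  exact: cvg_trans (near_eq_cvg quotE) q_cvg.
by split; [apply/cvg_ex; exists D | apply/cvg_lim].
Unshelve. all: by end_near.
Qed.

End QuadraticForm.

Section Rayleigh.
Variable R : realType.

Lemma rayleigh_homogeneous n (M : 'M[R]_n) (mu : R) :
  (forall y, sqnorm2 y = 1 -> mu <= sqnormM M y) ->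
  forall y, mu * sqnorm2 y <= sqnormM M y.
Proof.
move=> min_unit y; have [->|y0] := eqVneq y 0.
  by rewrite -(scale0r 0) sqnorm2Z sqnormMZ expr0n !mul0r mulr0.
have s_gt0 : 0 < sqnorm2 y by rewrite sqnorm2E lt0r dotxx_eq0 y0 dotxx_ge0.
pose c := (Num.sqrt (sqnorm2 y))^-1.
have c2 : c ^+ 2 = (sqnorm2 y)^-1 by rewrite exprVn sqr_sqrtr // ltW.
have := min_unit (c *: y); rewrite sqnorm2Z sqnormMZ c2 mulVf ?gt_eqF // => /(_ erefl).
by rewrite -ler_pdivlMr // mulrC.
Qed.

Lemma psd_mulmx_eq0 n (M : 'M[R]_n) (x : 'rV[R]_n) : M^T = M ->
  (forall y, 0 <= sqnormM M y) -> sqnormM M x = 0 -> x *m M = 0.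
Proof.
move=> MT psdM Qx0; set z := x *m M; apply/eqP; rewrite -dotxx_eq0.
set Z := dot z z; set Qz := sqnormM M z.
have Z_ge0 : 0 <= Z := dotxx_ge0 z.
have Qz_ge0 : 0 <= Qz := psdM z.
(* 0 <= sqnormM M (x + t *: z) = 2 t Z + t^2 Qz for every t; this t makes it
   negative unless Z = 0. *)
pose t := - Z / (Qz + 1).
have tE : t * (Qz + 1) = - Z by rewrite mulfVK // gt_eqF // ltr_pwDr.
have t_le0 : t <= 0 by rewrite /t mulNr oppr_le0 divr_ge0 // addr_ge0.
have := psdM (x + t *: z); rewrite sqnormMD // sqnormMZ Qx0 dotZr add0r -/z -/Z -/Qz => Q_ge0.
have t0 : t = 0 by nra.
by rewrite -oppr_eq0 -tE t0 mul0r.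
Qed.

Lemma rayleigh_eigenvector n (M : 'M[R]_n) (mu : R) (x : 'rV[R]_n) : M^T = M ->
  (forall y, mu * sqnorm2 y <= sqnormM M y) -> sqnormM M x = mu * sqnorm2 x ->
  x *m M = mu *: x.
Proof.
move=> MT mu_min Qx; pose N := M - mu%:M.
have NE y : sqnormM N y = sqnormM M y - mu * sqnorm2 y.
  by rewrite !sqnormME mulmxBr mul_mx_scalar dotBl dotZl sqnorm2E.
apply/eqP; rewrite -subr_eq0 -mul_mx_scalar -mulmxBr; apply/eqP/psd_mulmx_eq0.
- by rewrite linearB /= tr_scalar_mx MT.
- by move=> y; rewrite NE subr_ge0.
- by rewrite NE Qx subrr.
Qed.

Lemma eigenvalue_trmx_mulmx_ge n (M : 'M[R]_n) (mu s : R) : M^T = M -> 0 <= mu ->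
  (forall y, mu * sqnorm2 y <= sqnormM M y) -> eigenvalue (M^T *m M) s ->
  mu ^+ 2 <= s.
Proof.
move=> MT mu_ge0 mu_min /eigenvalueP [v vE v0].
have v_gt0 : 0 < dot v v by rewrite lt0r dotxx_eq0 v0 dotxx_ge0.
have WE : dot (v *m M) (v *m M) = s * dot v v.
  by rewrite dot_mulmxl -mulmxA MT -{1}MT vE dotZr.
(* 0 <= |vM - mu v|^2 = (s + mu^2) |v|^2 - 2 mu vMv <= (s - mu^2) |v|^2 *)
have := dotxx_ge0 (v *m M - mu *: v); rewrite !(dotBl, dotBr, dotZl, dotZr) WE.
rewrite (dotC v) -sqnormME => sq_ge0.
have := ler_wpM2l mu_ge0 (mu_min v); rewrite sqnorm2E => mu_Q.
rewrite -(ler_pM2r v_gt0); nra.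
Qed.

Lemma sigma_min_rayleigh n (M : 'M[R]_n) (mu : R) (x : 'rV[R]_n) :
  M^T = M -> 0 <= mu -> x != 0 -> sqnormM M x = mu * sqnorm2 x ->
  (forall y, mu * sqnorm2 y <= sqnormM M y) -> sigma_min M = mu.
Proof.
move=> MT mu_ge0 x0 Qx mu_min.
have xE := rayleigh_eigenvector MT mu_min Qx.
have eig_mu2 : eigenvalue (M^T *m M) (mu ^+ 2).
  by apply/eigenvalueP; exists x => //; rewrite MT mulmxA xE -scalemxAl xE scalerA.
have eig_ge := eigenvalue_trmx_mulmx_ge MT mu_ge0 mu_min.
rewrite /sigma_min; have -> : inf [set a | eigenvalue (M^T *m M) a] = mu ^+ 2.
  apply/eqP; rewrite eq_le lb_le_inf ?andbT; [|by exists (mu ^+ 2)|by move=> s /eig_ge].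
  by apply: ge_inf => //; exists (mu ^+ 2) => s /eig_ge.
by rewrite sqrtr_sqr ger0_norm.
Qed.

Lemma unit_sphere_compact k : compact [set x : 'rV[R]_k.+1 | sqnorm2 x = 1].
Proof.
apply: (@subclosed_compact _ _ [set v : 'rV[R]_k.+1 | forall i, `[-1, 1] (v 0 i)]).
- rewrite [X in closed X](_ : _ = sqnormM 1%:M @^-1` [set 1]); last first.
    by apply/funext => x; rewrite /preimage /= sqnormM1.
  by apply: preimage_closed; [move=> x _; exact: continuous_sqnormM | exact: closed_eq].
- exact: (@rV_compact R k.+1 (fun=> `[-1, 1]%classic) (fun=> @segment_compact _ _ _)).
- move=> v /= v1 i; rewrite /= in_itv /= -ler_norml.
  rewrite -(@ler_pXn2r _ 2) ?nnegrE // real_normK ?num_real // expr1n -v1.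
  rewrite sqnorm2E dotE (bigD1 i) //= -expr2 lerDl.
  by apply: sumr_ge0 => j _; rewrite -expr2 sqr_ge0.
Qed.

Lemma exists_rayleigh_min k (M : 'M[R]_k.+1) :
  exists2 x, sqnorm2 x = 1 & forall y, sqnorm2 y = 1 -> sqnormM M x <= sqnormM M y.
Proof.
have e0_unit : sqnorm2 (delta_mx 0 0 : 'rV[R]_k.+1) = 1.
  by rewrite sqnorm2E dot_delta mxE !eqxx.
have [x x1 x_min] := EVT_min_rV (ex_intro _ _ e0_unit) (@unit_sphere_compact k)
  (continuous_subspaceT (@continuous_sqnormM _ _ M)).
by exists x; [move: x1; rewrite inE | move=> y y1; apply: x_min; rewrite inE].
Qed.

Lemma sqnorm2_le_sqnormM n (M : 'M[R]_n) (x : 'rV[R]_n) : sym_posdef M ->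
  sqnorm2 x <= (sigma_min M)^-1 * sqnormM M x.
Proof.
case: n M x => [|k] M x [MT posM].
  by rewrite sqnormME dotE !big_ord0 mulr0 sqnorm2E dotE big_ord0.
have [x0 x0_unit x0_min] := exists_rayleigh_min M.
have x0_ne0 : x0 != 0 by rewrite -dotxx_eq0 -sqnorm2E x0_unit oner_neq0.
have mu_gt0 : 0 < sqnormM M x0 := posM x0 x0_ne0.
have mu_min := rayleigh_homogeneous x0_min.
have Qx0 : sqnormM M x0 = sqnormM M x0 * sqnorm2 x0 by rewrite x0_unit mulr1.
rewrite (sigma_min_rayleigh MT (ltW mu_gt0) x0_ne0 Qx0 mu_min).
by rewrite mulrC ler_pdivlMr // mulrC.
Qed.

End Rayleigh.

Section FirstOrder.
Variables (R : realType) (n : nat).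
Implicit Types (f : 'rV[R]_n -> R) (x y v : 'rV[R]_n).

Lemma derive_grad f x v : differentiable f x -> 'D_v f x = dot v (grad f x).
Proof.
move=> df; rewrite deriveE // {1}(row_sum_delta v) linear_sum dotE.
by apply: eq_bigr => j _; rewrite linearZ /= -deriveE // mxE.
Qed.

Lemma grad_eq f x (G : 'rV[R]_n) : (forall v, 'D_v f x = dot v G) -> grad f x = G.
Proof. by move=> DfE; apply/rowP => j; rewrite mxE DfE dotC dot_delta. Qed.

Lemma convex_derive_le f x y (df : R) : convex_fun f ->
  is_derive x (y - x) f df -> df <= f y - f x.
Proof.
move=> cvx [/cvg_ex [l quot_l] dfE]; have ldf : l = df.
  by rewrite -dfE; apply/esym/cvg_lim.
rewrite -ldf; apply: (cvgr_to_le (F := 0^'+)).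
  by apply: cvg_trans quot_l; apply: cvg_fmap2; apply: within_subset => h /= /gt_eqF ->.
near=> h; have h_gt0 : 0 < h by near: h; exact: nbhs_right_gt.
have h_le1 : h <= 1 by near: h; apply: nbhs_right_le; exact: ltr01.
have := cvx y x h; rewrite ltW //= h_le1 => /(_ isT).
have -> : h *: y + (1 - h) *: x = h *: (y - x) + x
  by apply/rowP => j; rewrite !mxE; ring.
move=> le_chord; rewrite /= -(ler_pM2l h_gt0) /GRing.scale /= mulrA mulfV ?gt_eqF // mul1r.
lra.
Unshelve. all: by end_near.
Qed.

Lemma is_derive_sqnorm2 x v : is_derive x v (@sqnorm2 R n) (2 * dot x v).
Proof.
have -> : 2 * dot x v = 2 * dot ((x + 0) *m 1%:M) v by rewrite addr0 mulmx1.
have -> : @sqnorm2 R n = fun y => sqnormM 1%:M (y + 0) by apply/funext => y; rewrite addr0 sqnormM1.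
exact/is_derive_sqnormM_shift/trmx1.
Qed.

Lemma grad_sqnormM_shiftD (M : 'M[R]_n) (k : R) (w : 'rV[R]_n) f x :
  M^T = M -> differentiable f x ->
  grad (fun y => k * sqnormM M (y + w) + f y) x = (2 * k) *: ((x + w) *m M) + grad f x.
Proof.
move=> MT df; apply: grad_eq => v.
have dQ := is_derive_sqnormM_shift w x v MT.
have dE : is_derive x v (fun y => k * sqnormM M (y + w) + f y) _ :=
  is_deriveD (is_deriveZ k dQ) (derivableP (diff_derivable df)).
rewrite derive_val dotDr -derive_grad // dotZr (dotC v) /GRing.scale /=; ring.
Qed.

Lemma weakly_convex_sub_le (L : R) f x y : weakly_convex L f -> differentiable f x ->
  f x - f y <= 'D_(x - y) f x + L / 2 * sqnorm2 (x - y).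
Proof.
move=> wcvx df.
have dF : is_derive x (y - x) (fun z => f z + L / 2 * sqnorm2 z)
    ('D_(y - x) f x + L / 2 *: (2 * dot x (y - x))).
  rewrite (_ : (fun z => _) = f + (L / 2) \*: @sqnorm2 R n) //.
  exact: is_deriveD (derivableP (diff_derivable df)) (is_deriveZ _ (is_derive_sqnorm2 _ _)).
have := convex_derive_le wcvx dF; rewrite /= !(derive_grad _ df) /GRing.scale /=.
by rewrite !sqnorm2E !(dotBl, dotBr) (dotC y x); lra.
Qed.

End FirstOrder.

Theorem lemma12 (R : realType) (n : nat) (M : 'M[R]_n)
  (P : 'rV[R]_n -> R) (L eps di dim1 : R)
  (thi thim1 thim2 : 'rV[R]_n) :
  sym_posdef M -> 0 < di -> 0 < dim1 -> 0 <= eps -> 0 <= L ->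
  (forall x, differentiable P x) -> weakly_convex L P ->
  let E := fun th : 'rV[R]_n =>
    1 / (2 * di ^+ 2) *
      sqnormM M (th - (1 + di / dim1) *: thim1 + (di / dim1) *: thim2)
    + P th in
  let Lambda := 1 / 2 * sqnorm2 (grad E thi) in
  2 * Lambda <= eps ^+ 2 ->
  (1 / 2 * sqnormM M (di^-1 *: (thi - thim1)) + P thi)
  - (1 / 2 * sqnormM M (dim1^-1 *: (thim1 - thim2)) + P thim1)
  <= (L * di ^+ 2 + di) / (2 * sigma_min M) * sqnormM M (di^-1 *: (thi - thim1))
     + di * eps ^+ 2 / 2.
Proof.
move=> posM di_gt0 dim1_gt0 eps_ge0 L_ge0 dP wcvx E Lambda crit.
set a := thi - thim1; set p := di^-1 *: a; set q := dim1^-1 *: (thim1 - thim2).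
have aE : a = di *: p by rewrite scalerA mulfV ?gt_eqF ?scale1r.
have Dg : dot a (grad E thi) = dot ((p - q) *m M) p + 'D_a P thi.
  set c := - ((1 + di / dim1) *: thim1) + (di / dim1) *: thim2.
  have shiftE : thi + c = di *: (p - q).
    by apply/rowP => j; rewrite !mxE; field; rewrite !gt_eqF.
  have -> : E = fun y => 1 / (2 * di ^+ 2) * sqnormM M (y + c) + P y.
    by apply/funext => y; rewrite /E -addrA.
  rewrite grad_sqnormM_shiftD ?posM.1 // dotDr -derive_grad // dotZr shiftE.
  by rewrite -scalemxAl dotZr {1}aE dotZl (dotC p); field; rewrite gt_eqF.
have young : dot a (grad E thi) <= di / 2 * eps ^+ 2 + di / 2 * sqnorm2 p.
  have g_le : sqnorm2 (grad E thi) <= eps ^+ 2 by move: crit; rewrite /Lambda; lra.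
  have : di / 2 * sqnorm2 (grad E thi) <= di / 2 * eps ^+ 2.
    by apply: ler_wpM2l; rewrite // divr_ge0 // ltW.
  have := dot_le_young a (grad E thi) di_gt0; rewrite -!sqnorm2E aE sqnorm2Z.
  have -> : (2 * di)^-1 * (di ^+ 2 * sqnorm2 p) = di / 2 * sqnorm2 p.
    by field; rewrite gt_eqF.
  lra.
have P_le := weakly_convex_sub_le thim1 wcvx (dP thi).
rewrite -/a aE sqnorm2Z -aE in P_le.
have Q_le := half_sqnormM_sub_le p q posM.
have spec : (L * di ^+ 2 + di) / 2 * sqnorm2 p <=
    (L * di ^+ 2 + di) / (2 * sigma_min M) * sqnormM M p.
  have -> : (L * di ^+ 2 + di) / (2 * sigma_min M) * sqnormM M p =
      (L * di ^+ 2 + di) / 2 * ((sigma_min M)^-1 * sqnormM M p) by rewrite invfM; ring.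
  apply: ler_wpM2l; last exact: sqnorm2_le_sqnormM.
  by apply: divr_ge0 => //; apply: addr_ge0 (ltW di_gt0); apply: mulr_ge0 (sqr_ge0 _).
lra.
Qed.
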